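(* In the free-group setting described in the context, the map $\pi_Y\circ\pi_f:X_f\to Y$ is not open.
   Context: Let $r\ge2$ and $\Gamma=F_r$ free on $S=\{a,b,a_3,\dots,a_r\}$. $Y$ is the Gromov boundary (infinite reduced words in $S\cup S^{-1}$, $\Gamma$ acting by concatenation and cancellation). For nontrivial $s\in\Gamma$, $y\in Y$ starts with $s$ if $y=sy'$ with the last letter of $s$ not inverse to the first letter of $y'$; $V_s$ is the set of such $y$; $a^\infty$ is the constant word $a$. Let $\{\Gamma_n\}$ be strictly decreasing finite-index normal subgroups with trivial intersection, $Z=\varprojlim\Gamma/\Gamma_n$ with left translation, $\pi_n:Z\to\Gamma/\Gamma_n$, $X=Y\times Z$ with product action, $\pi_Y:X\to Y$ the projection. For $n\ge2$ choose $\gamma_n\in\Gamma_{n-1}\setminus\Gamma_n$; $u_n=a^nba^{-n}b^{-1}$, $D_n=V_{u_n}$, $C_n=\pi_n^{-1}(\gamma_n\Gamma_n)$, $X_+=\bigcup_{n\ge2}D_n\times C_n$, $X_-=X\setminus(X_+\cup\{(a^\infty,e_\Gamma)\})$, $f=\pm1$ on $X_\pm$. $\pi_f:X_f\to X$ is the McMahon extension: the (unique up to conjugacy) minimal continuous action on a compact metrizable space with equivariant continuous surjection whose fibers are single points off $\Gamma(a^\infty,e_\Gamma)$ and two points on it, such that $f\circ\pi_f$ extends continuously to $X_f$. *)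

From HB Require Import structures.
From mathcomp Require Import all_boot all_order all_algebra.
From mathcomp Require Import all_classical all_reals.
From mathcomp Require Import topology.
From mathcomp Require Import Rstruct Rstruct_topology.
From Stdlib Require Rdefinitions.

Set Implicit Arguments.
Unset Strict Implicit.
Unset Printing Implicit Defensive.

Import Order.TTheory GRing.Theory Num.Theory.
Local Open Scope classical_set_scope.


(* A letter (i, true) stands for a_{i+1}, (i, false) for a_{i+1}^{-1}; *)

Definition letter := (nat * bool)%type.

Definition linv (x : letter) : letter := (x.1, ~~ x.2).

Definition valid_letter (r : nat) (x : letter) : bool := (x.1 < r)%N.

Definition la : letter := (0%N, true).
Definition lb : letter := (1%N, true).

Definition reduced (w : seq letter) : bool :=
  sorted (fun x y => y != linv x) w.

Definition Grp (r : nat) : set (seq letter) :=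
  [set g | all (valid_letter r) g && reduced g].

Definition pushL (x : letter) (w : seq letter) : seq letter :=
  match w with
  | y :: w' => if y == linv x then w' else x :: w
  | [::] => [:: x]
  end.

Definition gmul (g h : seq letter) : seq letter := foldr pushL h g.
Definition ginv (g : seq letter) : seq letter := rev (map linv g).
Definition gone : seq letter := [::].

Definition Yset (r : nat) : set (nat -> letter) :=
  [set y | (forall n, valid_letter r (y n)) /\ (forall n, y n.+1 != linv (y n))].

Definition actL (x : letter) (y : nat -> letter) : nat -> letter :=
  if y 0%N == linv x then (fun n => y n.+1)
  else (fun n => if n is n'.+1 then y n' else x).

Definition actY (g : seq letter) (y : nat -> letter) : nat -> letter :=
  foldr actL y g.

Definition catY (s : seq letter) (y : nat -> letter) : nat -> letter :=
  fun n => if (n < size s)%N then nth la s n else y (n - size s)%N.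

Definition Vs (r : nat) (s : seq letter) : set (nat -> letter) :=
  [set y | Yset r y /\ exists y', [/\ Yset r y', y = catY s y'
                                    & y' 0%N != linv (last la s)]].

Definition openY (r : nat) (A : set (nat -> letter)) : Prop :=
  A `<=` Yset r /\
  forall y, A y -> exists s, [/\ Grp r s, s != gone, Vs r s y & Vs r s `<=` A].

Definition ainf : nat -> letter := fun _ => la.

Definition lcoset (g : seq letter) (H : set (seq letter)) : set (seq letter) :=
  [set gmul g h | h in H].

Definition is_subgroup (r : nat) (H : set (seq letter)) : Prop :=
  [/\ H `<=` Grp r, H gone,
      (forall g h, H g -> H h -> H (gmul g h)) & (forall g, H g -> H (ginv g))].

Definition is_normal (r : nat) (H : set (seq letter)) : Prop :=
  forall g h, Grp r g -> H h -> H (gmul (gmul g h) (ginv g)).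

Definition finite_index (r : nat) (H : set (seq letter)) : Prop :=
  finite_set [set lcoset g H | g in Grp r].

(* (Gamma_n)_{n >= 1}: strictly decreasing finite-index normal subgroups
   with trivial intersection (the value Gam 0 is irrelevant/unused) *)
Definition good_chain (r : nat) (Gam : nat -> set (seq letter)) : Prop :=
  [/\ (forall n, (0 < n)%N ->
         [/\ is_subgroup r (Gam n), is_normal r (Gam n) & finite_index r (Gam n)]),
      (forall n, (0 < n)%N -> Gam n.+1 `<` Gam n)
    & (forall g, (forall n, (0 < n)%N -> Gam n g) -> g = gone)].

(* Z = inverse limit of Gamma/Gamma_n (n >= 1): compatible sequences of left
   cosets; the coordinate 0 is normalised to the whole group *)
Definition Zset (r : nat) (Gam : nat -> set (seq letter))
  : set (nat -> set (seq letter)) :=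
  [set z | [/\ z 0%N = Grp r,
              (forall n, (0 < n)%N -> exists2 g, Grp r g & z n = lcoset g (Gam n))
            & (forall n, (0 < n)%N -> z n.+1 `<=` z n)]].

Definition zE (r : nat) (Gam : nat -> set (seq letter)) : nat -> set (seq letter) :=
  fun n => if n is 0%N then Grp r else Gam n.

Definition actZ (g : seq letter) (z : nat -> set (seq letter))
  : nat -> set (seq letter) :=
  fun n => [set gmul g h | h in z n].

Definition Cyl (r : nat) (Gam : nat -> set (seq letter)) (n : nat)
  (z : nat -> set (seq letter)) : set (nat -> set (seq letter)) :=
  [set z' | Zset r Gam z' /\ z' n = z n].

Definition pt := ((nat -> letter) * (nat -> set (seq letter)))%type.

Definition Xset (r : nat) (Gam : nat -> set (seq letter)) : set pt :=
  Yset r `*` Zset r Gam.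

Definition actX (g : seq letter) (p : pt) : pt := (actY g p.1, actZ g p.2).

Definition openX (r : nat) (Gam : nat -> set (seq letter)) (W : set pt) : Prop :=
  W `<=` Xset r Gam /\
  forall p, W p -> exists s n,
    [/\ Grp r s, s != gone, (0 < n)%N, Vs r s p.1 &
        Vs r s `*` Cyl r Gam n p.2 `<=` W].

Definition piY (p : pt) : nat -> letter := p.1.

Definition pt0 (r : nat) (Gam : nat -> set (seq letter)) : pt := (ainf, zE r Gam).

Definition orbit0 (r : nat) (Gam : nat -> set (seq letter)) : set pt :=
  [set actX g (pt0 r Gam) | g in Grp r].

Definition u_ (n : nat) : seq letter :=
  nseq n la ++ lb :: nseq n (linv la) ++ [:: linv lb].

Definition D_ (r : nat) (n : nat) : set (nat -> letter) := Vs r (u_ n).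

Definition C_ (r : nat) (Gam : nat -> set (seq letter)) (gam : nat -> seq letter)
  (n : nat) : set (nat -> set (seq letter)) :=
  [set z | Zset r Gam z /\ z n = lcoset (gam n) (Gam n)].

Definition Xplus r Gam gam : set pt :=
  \bigcup_(n in [set n | (2 <= n)%N]) (D_ r n `*` C_ r Gam gam n).

Definition Xminus r Gam gam : set pt :=
  Xset r Gam `\` (Xplus r Gam gam `|` [set pt0 r Gam]).

Definition cont_action (r : nat) (Xf : topologicalType)
  (actf : seq letter -> Xf -> Xf) : Prop :=
  [/\ actf gone = id,
      (forall g h, Grp r g -> Grp r h -> actf (gmul g h) = actf g \o actf h)
    & (forall g, Grp r g -> continuous (actf g))].

Definition minimal_action (r : nat) (Xf : topologicalType)
  (actf : seq letter -> Xf -> Xf) : Prop :=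
  forall A : set Xf, closed A ->
    (forall g x, Grp r g -> A x -> A (actf g x)) -> A = set0 \/ A = setT.

Definition McMahon_ext (r : nat) (Gam : nat -> set (seq letter))
  (gam : nat -> seq letter) (Xf : pseudoMetricType Rdefinitions.R)
  (actf : seq letter -> Xf -> Xf) (pif : Xf -> pt) : Prop :=
  [/\ [/\ hausdorff_space Xf, compact [set: Xf],
          cont_action r actf & minimal_action r actf],
      [/\ forall x, Xset r Gam (pif x),
          Xset r Gam `<=` range pif,
          (forall W, openX r Gam W -> open (pif @^-1` W))
        & (forall g x, Grp r g -> pif (actf g x) = actX g (pif x))],
      (forall p, Xset r Gam p -> orbit0 r Gam p ->
         exists x1 x2, x1 != x2 /\ pif @^-1` [set p] = [set x1; x2]),
      (forall p, Xset r Gam p -> ~ orbit0 r Gam p ->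
         exists x, pif @^-1` [set p] = [set x]) &
      exists F : Xf -> Rdefinitions.R, [/\ continuous F,
         (forall x, Xplus r Gam gam (pif x) -> F x = 1%R) &
         (forall x, Xminus r Gam gam (pif x) -> F x = (-1)%R)]].

(** Lift the points [(u_n b^-oo, z_n)] of [X_+] to [X_f], where [f o pi_f]
   extends to a continuous [F] equal to [1] there, and take a cluster point
   [x] by compactness: [F x = 1] and, since [u_n] starts with [a^n], [x] lies
   over [a^oo].  If [pi_Y o pi_f] were open, the image of [{F > 0}] would
   contain a basic neighbourhood [V_(a^k)] of [a^oo], hence the image of a
   point [x'] with [F x' > 0] over [a^k b^oo].  But [a^k b^oo] contains no
   letter [a^-1], so it lies in no [D_n], and [pi_f x'] is in [X_-]: then
   [F x' = -1]. *)
From HB Require Import structures.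
From mathcomp Require Import all_boot all_order all_algebra.
From mathcomp Require Import all_classical all_reals.
From mathcomp Require Import topology normedtype.
From mathcomp Require Import Rstruct Rstruct_topology.
From mathcomp Require Import zify.
From Stdlib Require Rdefinitions.

Set Implicit Arguments.
Unset Strict Implicit.
Unset Printing Implicit Defensive.

Import Order.TTheory GRing.Theory Num.Theory.
Local Open Scope classical_set_scope.

Lemma catY_lt s y k : (k < size s)%N -> catY s y k = nth la s k.
Proof. by rewrite /catY => ->. Qed.

Lemma catY_ge s y k : (size s <= k)%N -> catY s y k = y (k - size s)%N.
Proof. by rewrite /catY leqNgt => /negbTE ->. Qed.

Lemma linv_neq x : linv x != x.
Proof. by case: x => i [] //=; rewrite /linv /= xpair_eqE eqxx. Qed.

Lemma Yset_const r x : valid_letter r x -> Yset r (fun _ => x).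
Proof. by move=> vx; split=> // n; rewrite eq_sym linv_neq. Qed.

Lemma Yset_catY r s y : Grp r s -> Yset r y -> y 0%N != linv (last la s) ->
  Yset r (catY s y).
Proof.
case/andP=> vs rs [vy ry] hc; split=> n.
  have [h|h] := ltnP n (size s); last by rewrite catY_ge.
  by rewrite catY_lt //; apply: (allP vs); apply: mem_nth.
have [h1|h1] := ltnP n.+1 (size s).
  rewrite !catY_lt ?(ltnW h1) //.
  move: rs h1; rewrite /reduced; case: s {vs hc} => [|x p] //= /pathP hp h1.
  by have := hp la n h1; case: n h1.
have [h2|h2] := ltnP n (size s); last first.
  by rewrite !catY_ge ?(leq_trans h2) // subSn.
have en : n.+1 = size s by apply/eqP; rewrite eqn_leq h1 h2.
rewrite catY_ge // catY_lt // -en subnn.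
have -> : n = (size s).-1 by rewrite -en.
by rewrite nth_last.
Qed.

Lemma Vs_catY r s y : Grp r s -> Yset r y -> y 0%N != linv (last la s) ->
  Vs r s (catY s y).
Proof. by move=> gs hy hc; split; [exact: Yset_catY | exists y]. Qed.

Lemma Vs_nth r s y i : Vs r s y -> (i < size s)%N -> y i = nth la s i.
Proof. by move=> [_ [y' [_ -> _]]]; exact: catY_lt. Qed.

Lemma mkseq_Grp r y k : Yset r y -> Grp r (mkseq y k.+1).
Proof.
move=> [vy ry]; apply/andP; split.
  by rewrite all_map; apply/allP => i _; exact: vy.
rewrite /reduced /= -/(iota 1 k).
by elim: k 0%N => [|k IH] m //=; rewrite ry IH.
Qed.

Lemma Vs_mkseq r y k : Yset r y -> Vs r (mkseq y k.+1) y.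
Proof.
move=> hy; split=> //; exists (fun j => y (j + k.+1)%N); split.
- by case: hy => vy ry; split=> n //; rewrite addSn ry.
- apply: funext => n; rewrite /catY size_mkseq.
  by case: ltnP => h; [rewrite nth_mkseq | rewrite subnK].
- by rewrite -nth_last size_mkseq nth_mkseq //=; case: hy => _ ry; rewrite ry.
Qed.

Lemma path_nseq (e : rel letter) x m : e x x -> path e x (nseq m x).
Proof. by move=> h; elim: m => //= m ->; rewrite h. Qed.

Lemma last_nseq (x : letter) m : last x (nseq m x) = x.
Proof. by elim: m. Qed.

Lemma u_Grp r n : (2 <= r)%N -> Grp r (u_ n.+1).
Proof.
move=> hr; apply/andP; split.
  rewrite /u_ all_cat /= all_cat /= !all_nseq /valid_letter /=.
  by rewrite hr (ltn_trans _ hr) ?orbT.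
rewrite /reduced /u_ /= cat_path path_nseq //= last_nseq /=.
by rewrite cat_path path_nseq //= last_nseq.
Qed.

Lemma u_size n : size (u_ n) = (n + (n + 2))%N.
Proof. by rewrite /u_ size_cat /= size_cat !size_nseq /= addn1 addn2. Qed.

Lemma u_nth_lt n k : (k < n)%N -> nth la (u_ n) k = la.
Proof. by move=> h; rewrite /u_ nth_cat size_nseq h nth_nseq h. Qed.

Lemma u_nth_S n : (0 < n)%N -> nth la (u_ n) n.+1 = linv la.
Proof.
move=> h; rewrite /u_ nth_cat size_nseq ltnNge leqnSn /= subSn // subnn /=.
by rewrite nth_cat size_nseq h nth_nseq h.
Qed.

Lemma u_last n : last la (u_ n) = linv lb.
Proof. by rewrite /u_ last_cat /= last_cat. Qed.

Lemma D_ainv r n y : (0 < n)%N -> D_ r n y -> y n.+1 = linv la.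
Proof. by move=> n0 /Vs_nth ->; rewrite ?u_nth_S // u_size; lia. Qed.

Definition u_ray (n : nat) : nat -> letter := catY (u_ n) (fun _ => linv lb).

Lemma D_u_ray r n : (2 <= r)%N -> D_ r n.+1 (u_ray n.+1).
Proof.
move=> hr; apply: Vs_catY; last by rewrite u_last.
  exact: u_Grp.
exact: Yset_const.
Qed.

Lemma u_ray_lt n k : (k < n)%N -> u_ray n k = la.
Proof. by move=> kn; rewrite /u_ray catY_lt ?u_nth_lt // u_size; lia. Qed.

Lemma good_chain_Grp r Gam n g : good_chain r Gam -> (0 < n)%N -> Gam n g ->
  Grp r g.
Proof. by case=> hsub _ _ /hsub [[+ _ _ _] _ _]; apply. Qed.

Definition zcoset (r : nat) (Gam : nat -> set (seq letter)) (g : seq letter)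
  : nat -> set (seq letter) :=
  fun k => if k is 0%N then Grp r else lcoset g (Gam k).

Lemma zcoset_Zset r Gam g : good_chain r Gam -> Grp r g ->
  Zset r Gam (zcoset r Gam g).
Proof.
move=> [_ hdec _] gg; split=> // [[|k]|[|k]] // _.
  by exists g.
by move=> _ [h hh <-]; exists h => //; apply: (properW (hdec k.+1 isT)).
Qed.

Lemma zcoset_C r Gam gam n : good_chain r Gam -> (0 < n)%N -> Grp r (gam n) ->
  C_ r Gam gam n (zcoset r Gam (gam n)).
Proof. by move=> hGam n0 gg; split; [exact: zcoset_Zset | case: n n0 {gg}]. Qed.

Lemma openX_Vs r Gam s : Grp r s -> s != gone ->
  openX r Gam (Vs r s `*` Zset r Gam).
Proof.
move=> gs sne; split=> [q [[hq _] hz] | q [hq hz]]; first by split.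
by exists s, 1%N; split=> // w [hw [hw2 _]]; split.
Qed.

Lemma Xminus_no_ainv r Gam gam p : Xset r Gam p ->
  (forall k, p.1 k != linv la) -> p.1 != ainf -> Xminus r Gam gam p.
Proof.
move=> hp noinv pa; split=> // -[[n n2 [Dn _]] | p0].
  by move: (noinv n.+1); rewrite (D_ainv (ltnW n2) Dn) eqxx.
by move: pa; rewrite p0 eqxx.
Qed.

Lemma cluster_seq (T : topologicalType) (xs : nat -> T) x k (A : set T) :
  cluster (xs @ \oo) x -> nbhs x A -> exists2 n, (k <= n)%N & A (xs n).
Proof.
move=> cx xA; have tail : (xs @ \oo) (xs @` [set n | (k <= n)%N]).
  by exists k => // n kn; exists n.
by have [_ [[n kn <-] An]] := cx _ _ tail xA; exists n.
Qed.

Lemma cluster_seq_closed (T : topologicalType) (xs : nat -> T) x (A : set T) :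
  closed A -> (forall n, A (xs n)) -> cluster (xs @ \oo) x -> A x.
Proof.
move=> /closure_id cA Axs cx; rewrite cA => B /(cluster_seq 0 cx) [n _ Bn].
by exists (xs n).
Qed.

Section NotOpen.
Variables (r : nat) (Gam : nat -> set (seq letter)) (gam : nat -> seq letter).
Hypothesis hr : (2 <= r)%N.
Hypothesis hGam : good_chain r Gam.
Hypothesis hgam : forall n, (2 <= n)%N -> Gam n.-1 (gam n).
Variables (Xf : topologicalType) (pif : Xf -> pt) (F : Xf -> Rdefinitions.R).
Hypothesis Xf_compact : compact [set: Xf].
Hypothesis pif_X : forall x, Xset r Gam (pif x).
Hypothesis pif_onto : Xset r Gam `<=` range pif.
Hypothesis pif_cont : forall W, openX r Gam W -> open (pif @^-1` W).
Hypothesis F_cont : continuous F.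
Hypothesis F_Xplus : forall x, Xplus r Gam gam (pif x) -> F x = 1%R.
Hypothesis F_Xminus : forall x, Xminus r Gam gam (pif x) -> F x = (-1)%R.

Lemma Xplus_u_ray_zcoset n : let p := (u_ray n.+2, zcoset r Gam (gam n.+2)) in
  Xset r Gam p /\ Xplus r Gam gam p.
Proof.
have gg : Grp r (gam n.+2) by apply: (good_chain_Grp hGam _ (hgam _)).
have [hD hC] := (D_u_ray n.+1 hr, zcoset_C hGam (isT : 0 < n.+2)%N gg).
by split; [split; [case: hD | case: hC] | exists n.+2].
Qed.

Lemma cluster_over_ainf : exists x, F x = 1%R /\ (pif x).1 = ainf.
Proof.
have /choice [xs hxs] : forall n, exists x,
    pif x = (u_ray n.+2, zcoset r Gam (gam n.+2)).
  by move=> n; have [/pif_onto [x _ <-] _] := Xplus_u_ray_zcoset n; exists x.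
have [x [_ cx]] := @Xf_compact (xs @ \oo) _ filterT.
exists x; split.
  apply: (cluster_seq_closed (A := F @^-1` [set 1%R]) _ _ cx) => [|n].
    by move/continuous_closedP: F_cont; apply; exact: closed_eq.
  by apply: F_Xplus; rewrite hxs; case: (Xplus_u_ray_zcoset n).
have Y0 : Yset r (pif x).1 by case: (pif_X x).
apply: funext => k; pose W := Vs r (mkseq (pif x).1 k.+1) `*` Zset r Gam.
have xW : nbhs x (pif @^-1` W).
  apply: open_nbhs_nbhs; split.
    by apply/pif_cont/openX_Vs => //; exact: mkseq_Grp.
  by split; [exact: Vs_mkseq | case: (pif_X x)].
have [n kn [xsV _]] := cluster_seq k cx xW.
have := Vs_nth (i := k) xsV; rewrite size_mkseq nth_mkseq // hxs.
by move=> /(_ (ltnSn k)) <-; exact: u_ray_lt (leqW kn : k < n.+2)%N.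
Qed.

Lemma image_Fpos_not_openY :
  ~ openY r ((piY \o pif) @` (F @^-1` [set t | (0 < t)%R])).
Proof.
move=> [_ hO]; have [x [Fx1 xa]] := cluster_over_ainf.
have [s [gs sne sa sub]] : exists s, [/\ Grp r s, s != gone, Vs r s ainf
    & Vs r s `<=` (piY \o pif) @` (F @^-1` [set t | (0 < t)%R])].
  by apply: hO; exists x; rewrite //= Fx1 ltr01.
have s_la i : (i < size s)%N -> nth la s i = la by move=> /(Vs_nth sa) <-.
have s0 : (0 < size s)%N by case: s sne {gs sa sub s_la}.
have s_last : last la s = la by rewrite -nth_last s_la // prednK.
pose y := catY s (fun _ => lb).
have [|x' /= Fx' x'y] := sub y.
  by apply: Vs_catY; rewrite ?s_last //; apply: Yset_const.
suff /F_Xminus Fx'N : Xminus r Gam gam (pif x').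
  by move: Fx'; rewrite Fx'N ltr0N1.
apply: Xminus_no_ainv; rewrite /piY in x'y; rewrite ?x'y //.
  move=> k; rewrite /y /catY; case: ifP => // /s_la ->.
  by rewrite eq_sym linv_neq.
by apply/eqP => /(congr1 (fun z => z (size s))); rewrite /y catY_ge // subnn.
Qed.

End NotOpen.

Theorem lemma5p4 (r : nat) (hr : (2 <= r)%N)
  (Gam : nat -> set (seq letter)) (hGam : good_chain r Gam)
  (gam : nat -> seq letter)
  (hgam : forall n, (2 <= n)%N -> Gam n.-1 (gam n) /\ ~ Gam n (gam n))
  (Xf : pseudoMetricType Rdefinitions.R) (actf : seq letter -> Xf -> Xf) (pif : Xf -> pt)
  (hM : McMahon_ext r Gam gam actf pif) :
  ~ (forall U : set Xf, open U -> openY r ((piY \o pif) @` U)).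
Proof.
move=> piY_open.
case: hM => [[_ Xf_compact _ _] [pif_X pif_onto pif_cont _] _ _ [F [Fc Fp Fm]]].
apply: (image_Fpos_not_openY hr hGam (fun n n2 => (hgam n n2).1) Xf_compact
  pif_X pif_onto pif_cont Fc Fp Fm).
by apply/piY_open/open_comp => [x _|]; [exact: Fc | exact: open_gt].
Qed.
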